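(* Let $n\ge4$ and $\sigma=(\sigma_1,\dots,\sigma_{n-2})\in\Sigma_n$. Then the alter ego $\underset{\sim}{\mathbf C}_n^{\sigma}=(C_n;\sigma_1,\dots,\sigma_{n-2},\mathscr T)$ yields a duality on $\mathcal G_n$, i.e. for every $\mathbf A\in\mathcal G_n$ the evaluation map $e_{\mathbf A}\colon\mathbf A\to E^\sigma D^\sigma(\mathbf A)$ is an isomorphism.
   Context: $\mathbf C_n$ is the Heyting algebra whose universe is the chain $\{0<1<\dots<n-1\}$, with lattice operations min and max, $\bot=0$, $\top=n-1$, and $a\to b=\top$ if $a\le b$, $a\to b=b$ if $b<a$. $\mathcal G_n$ is the class of algebras isomorphic to subalgebras of direct powers of $\mathbf C_n$; $\mathcal G_n(\mathbf A,\mathbf C_n)$ is the set of Heyting homomorphisms $\mathbf A\to\mathbf C_n$. For $n\ge4$: for $1\le i\le n-2$, $h_i$ is the endomorphism of $\mathbf C_n$ with $h_i(k)=k+1$ if $i\le k<n-1$ and $h_i(k)=k$ otherwise. For $1\le i\le n-3$, $g_i$ is the partial map with domain $C_n\setminus\{i\}$ given by $g_i(i+1)=i$ and $g_i(k)=k$ for $k\notin\{i,i+1\}$, and $f_i\colon C_n\setminus\{i+1\}\to C_n\setminus\{i\}$ is its inverse; these are partial endomorphisms (homomorphisms from a subalgebra of $\mathbf C_n$ into $\mathbf C_n$). $\Sigma_n=\{f_1,g_1\}\times\dots\times\{f_{n-3},g_{n-3}\}\times\{h_1,\dots,h_{n-2}\}$. Natural duality set-up: for an alter ego $(C_n;P,\mathscr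 T)$ with $P$ a set of total and partial endomorphisms and $\mathscr T$ discrete, powers carry the product topology and pointwise-lifted operations ($p^S(x)=p\circ x$, defined iff $x(s)\in\operatorname{dom}p$ for all $s$); a substructure is a subset closed under these (partial) operations wherever defined; $\mathcal X$ is the class of topological structures isomorphic to closed substructures of powers (empty one included), with morphisms the continuous maps $\varphi$ preserving total operations and such that, for partial $p$, $x\in\operatorname{dom}p^{\mathbf X}$ implies $\varphi(x)\in\operatorname{dom}p^{\mathbf Y}$ and $\varphi(p^{\mathbf X}(x))=p^{\mathbf Y}(\varphi(x))$. $D(\mathbf A)=\mathcal G_n(\mathbf A,\mathbf C_n)$ as a closed substructure of the power with exponent $A$; $E(\mathbf X)$ is the set of $\mathcal X$-morphisms from $\mathbf X$ to the alter ego, as a subalgebra of $\mathbf C_n^X$; $e_{\mathbf A}(a)(x)=x(a)$. $D^\sigma,E^\sigma$ denote these functors for the alter ego $\underset{\sim}{\mathbf C}_n^{\sigma}$. *)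

From mathcomp Require Import all_boot.
From Stdlib Require Import List.
Set Implicit Arguments. Unset Strict Implicit. Unset Printing Implicit Defensive.

(* The chain C_n: carrier {0,...,n-1} represented by naturals k < n.
   meet = min, join = max, bot = 0, top = n-1, Goedel implication. *)
Definition cbot : nat := 0.
Definition ctop (n : nat) : nat := n.-1.
Definition cimp (n a b : nat) : nat := if a <= b then ctop n else b.

(* Signature of Heyting algebras (no axioms needed: members of G_n are
   by definition (isomorphic to) subalgebras of powers of C_n). *)
Record HAlg := {
  carrier :> Type;
  hmeet : carrier -> carrier -> carrier;
  hjoin : carrier -> carrier -> carrier;
  himp  : carrier -> carrier -> carrier;
  hbot  : carrier;
  htop  : carrier }.

Definition is_hom (n : nat) (A : HAlg) (x : A -> nat) : Prop :=
  [/\ (forall a, x a < n),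
      (forall a b, x (hmeet a b) = minn (x a) (x b)),
      (forall a b, x (hjoin a b) = maxn (x a) (x b)),
      (forall a b, x (himp a b) = cimp n (x a) (x b)) &
      (x (hbot A) = cbot /\ x (htop A) = ctop n)].

Definition in_Gn (n : nat) (A : HAlg) : Prop :=
  exists (S : Type) (emb : A -> S -> nat),
    (forall a b, emb a = emb b -> a = b) /\
    (forall s, is_hom n (fun a => emb a s)).

Definition hmap (n i k : nat) : nat :=
  if (i <= k) && (k < n.-1) then k.+1 else k.

Definition gdom (i k : nat) : bool := k != i.
Definition gmap (i k : nat) : nat := if k == i.+1 then i else k.
Definition fdom (i k : nat) : bool := k != i.+1.
Definition fmap (i k : nat) : nat := if k == i then i.+1 else k.

(* An element sigma of Sigma_n is encoded by (c, j): for 1 <= i <= n-3,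
   sigma_i = f_i if c i = true and g_i if c i = false; sigma_{n-2} = h_j
   with 1 <= j <= n-2. *)
Definition pdom (c : nat -> bool) (i k : nat) : bool :=
  if c i then fdom i k else gdom i k.
Definition pmap (c : nat -> bool) (i k : nat) : nat :=
  if c i then fmap i k else gmap i k.

(* D^sigma(A) = G_n(A, C_n), as a subset of C_n^A. *)
Definition DA (n : nat) (A : HAlg) : (A -> nat) -> Prop := is_hom n (A := A).

(* phi : D^sigma(A) -> C_n is continuous (product topology on C_n^A with
   C_n discrete, subspace topology on D(A)): every point has a basic open
   neighbourhood (given by finitely many coordinates) on which phi is
   constant. *)
Definition continuous_on_D (n : nat) (A : HAlg) (phi : (A -> nat) -> nat) : Prop :=
  forall x, DA n x ->
    exists F : list A, forall y, DA n y ->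
      (forall a, In a F -> y a = x a) -> phi y = phi x.

(* phi is an X-morphism from D^sigma(A) to the alter ego C_n^sigma,
   i.e. an element of E^sigma D^sigma(A). *)
Definition alter_morphism (n : nat) (c : nat -> bool) (j : nat) (A : HAlg)
    (phi : (A -> nat) -> nat) : Prop :=
  [/\ (forall x, DA n x -> phi x < n),
      continuous_on_D n phi,
      (forall x, DA n x -> phi (hmap n j \o x) = hmap n j (phi x)) &
      (forall i, 1 <= i <= n - 3 -> forall x, DA n x ->
         (forall a, pdom c i (x a)) ->
         pdom c i (phi x) /\ phi (pmap c i \o x) = pmap c i (phi x))].

(* e_A : A -> C_n^{D(A)}, a |-> (x |-> x a), is a homomorphism into the
   pointwise power (restricted to D(A)). *)
Definition eval_is_hom (n : nat) (A : HAlg) : Prop :=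
  [/\ (forall (a b : A) x, DA n x -> x (hmeet a b) = minn (x a) (x b)),
      (forall (a b : A) x, DA n x -> x (hjoin a b) = maxn (x a) (x b)),
      (forall (a b : A) x, DA n x -> x (himp a b) = cimp n (x a) (x b)),
      (forall x, DA n x -> x (hbot A) = cbot) &
      (forall x, DA n x -> x (htop A) = ctop n)].

From Pilot Require Import Defs.
From Stdlib Require Import List.
From mathcomp Require Import all_boot zify.
From mathcomp Require boolp all_classical topology nat_topology function_spaces discrete_topology.
From HB Require Import structures.
Set Implicit Arguments. Unset Strict Implicit. Unset Printing Implicit Defensive.

(* For A in G_n, the evaluation map is a homomorphism, its components are
   morphisms of the dual and it is injective (the homomorphisms into C_n
   separate points); the content of the theorem is that every morphism
   phi : D(A) -> C_n of the dual is an evaluation.  The proof has three layers.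
   1. Combinatorics on C_n [config_coord]: a function Psi on "configurations"
      (strictly increasing runs of middle values followed by tops) commuting
      with h_j and with every applicable sigma_i is a fixed coordinate.
   2. Local form [phi_eval_factors]: the homomorphisms factoring through a
      fixed x are relabellings of x by configurations, so by layer 1 phi is an
      evaluation on them; a collapsing argument [pair_key] then gives a common
      evaluation point for any two homomorphisms [phi_eval_pair].
   3. Globalisation: the lattice median is a near-unanimity term, so pairwise
      evaluation points interpolate to finite families [phi_eval_family];
      compactness of D(A) (Tychonoff, [finite_subcover]) makes phi depend on
      finitely many coordinates and the pair witnesses range over a finite
      list, whence phi is a single evaluation [phi_is_evaluation]. *)

(* The sets {y | agree_on L y z} are the basic open neighbourhoods of z in
   the product topology of a power of a discrete space. *)
Definition agree_on (I : Type) (L : list I) (y z : I -> nat) : Prop :=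
  forall i, In i L -> y i = z i.

(* [fin_closed K]: K is closed in the product topology, i.e. a function all of
   whose finite restrictions extend to members of K is itself in K. *)
Definition fin_closed (I : Type) (K : (I -> nat) -> Prop) : Prop :=
  forall z, (forall L : list I, exists k, K k /\ agree_on L k z) -> K z.

Lemma fin_closed_sum (I J : Type) (K1 : (I -> nat) -> Prop) (K2 : (J -> nat) -> Prop) :
  fin_closed K1 -> fin_closed K2 ->
  fin_closed (fun z : I + J -> nat => K1 (fun i => z (inl i)) /\ K2 (fun i => z (inr i))).
Proof.
move=> c1 c2 z h; split; [apply: c1 | apply: c2] => L.
- have [k [[k1 _] hk]] := h (List.map inl L); exists (fun i => k (inl i)); split => // i iL.
  by apply: hk; apply/in_map_iff; exists i.
- have [k [[_ k2] hk]] := h (List.map inr L); exists (fun i => k (inr i)); split => // i iL.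
  by apply: hk; apply/in_map_iff; exists i.
Qed.

Module Compactness.
Import all_classical topology nat_topology function_spaces discrete_topology.
Local Open Scope classical_set_scope.
(* The topology library works with pointed function spaces. *)
HB.instance Definition _ (I : Type) :=
  isPointed.Build {ptws {classic I} -> nat} (fun _ => 0%N).

Lemma In_mem (T : eqType) (x : T) (s : seq T) : In x s <-> x \in s.
Proof.
elim: s => [|y s IH] //=; rewrite inE; split.
  by case=> [->|/IH ->]; rewrite ?eqxx ?orbT.
by case/orP => [/eqP ->|/IH]; [left|right].
Qed.

(* A closed subset K of the box {0,..,n-1}^I is compact (Tychonoff), so the
   cover of K by the neighbourhoods {z | agree_on (U k) z k}, k in K, has a
   finite subcover. *)
Lemma finite_subcover (I : Type) (n : nat) (K : (I -> nat) -> Prop) :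
  (forall z, K z -> forall i, (z i < n)%N) -> fin_closed K ->
  forall U : (I -> nat) -> list I,
  exists P : list (I -> nat), (forall k, In k P -> K k) /\
    forall z, K z -> exists k, In k P /\ agree_on (U k) z k.
Proof.
move=> Kb Kc U.
pose X := {ptws {classic I} -> nat}.
have openS (L : list I) (z : X) : open [set g : X | agree_on L g z].
  elim: L => [|i L IH].
    suff -> : [set g : X | agree_on [::] g z] = setT by exact: openT.
    by apply/seteqP; split => // g _ i [].
  have -> : [set g : X | agree_on (i :: L) g z] =
     proj i @^-1` [set z i] `&` [set g : X | agree_on L g z].
    apply/seteqP; split => g /=.
      by move=> H; split; [apply: H; left | move=> k kL; apply: H; right].
    by move=> [Hi HL] k [<-|kL]; [exact: Hi | exact: HL].
  apply: openI => //; apply: open_comp; last exact: discrete_open.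
  by move=> g _; exact: proj_continuous.
have box : compact [set f : X | forall i, `I_n (f i)].
  apply: (@tychonoff _ (fun _ => nat) (fun _ => `I_n)) => i.
  exact/finite_compact/finite_II.
have Kclosed : closed (K : set X).
  move=> z zcl; apply: Kc => L.
  have [k [Kk Sk]] := zcl [set g : X | agree_on L g z]
     (open_nbhs_nbhs (conj (openS L z) (fun i _ => erefl))).
  by exists k.
have : compact (K : set X).
  by apply: (subclosed_compact Kclosed box) => z Kz i; exact: Kb.
rewrite compact_cover => /(_ X K (fun k : X => [set g : X | agree_on (U k) g k])).
case=> [k _|z Kz|D sD cov]; first exact: openS; first by exists z.
exists (finmap.enum_fset D); split.
  by move=> k /In_mem /sD; rewrite inE.
by move=> z /cov [k kD Sk]; exists k; split => //; apply/In_mem.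
Qed.

End Compactness.
Import Compactness.

Lemma hmap0 n j : 1 <= j -> hmap n j 0 = 0.
Proof. by case: j. Qed.

Lemma hmapT n j : hmap n j n.-1 = n.-1.
Proof. by rewrite /hmap ltnn andbF. Qed.

Lemma pmap0 c i : 1 <= i -> Defs.pmap c i 0 = 0.
Proof. by rewrite /Defs.pmap /fmap /gmap; case: (c i); case: i. Qed.

Lemma pmapT n c i : 1 <= i <= n - 3 -> Defs.pmap c i n.-1 = n.-1.
Proof.
by move=> hi; rewrite /Defs.pmap /fmap /gmap; case: (c i); rewrite ifF //; apply/eqP; lia.
Qed.

Lemma pdom0 c i : 1 <= i -> pdom c i 0.
Proof. by rewrite /pdom /fdom /gdom; case: (c i); case: i. Qed.

Lemma pdomT n c i : 1 <= i <= n - 3 -> pdom c i n.-1.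
Proof. by move=> hi; rewrite /pdom /fdom /gdom; case: (c i); apply/eqP; lia. Qed.

Lemma pmap_inj c i u v :
  pdom c i u -> pdom c i v -> Defs.pmap c i u = Defs.pmap c i v -> u = v.
Proof.
rewrite /pdom /Defs.pmap /fdom /fmap /gdom /gmap; case: (c i) => /eqP hu /eqP hv;
by case: eqP => eu; case: eqP => ev; lia.
Qed.

Lemma pmap_fix c i u : pdom c i u -> Defs.pmap c i u = u -> u <> i /\ u <> i.+1.
Proof.
rewrite /pdom /Defs.pmap /fdom /fmap /gdom /gmap; case: (c i) => /eqP hu;
by case: eqP => e h; split; lia.
Qed.

Section Configurations.
Variables n K : nat.
Hypothesis n2 : 1 < n.
Hypothesis hK : K <= n - 2.

(* A configuration of length K with s proper entries: at positions 1..s a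
   strictly increasing run of values in [1, n-2], at positions s+1..K the top
   n-1.  Only positions 1..K matter. *)
Definition config s (m : nat -> nat) : Prop :=
  [/\ s <= K, (forall i, 1 <= i <= s -> 1 <= m i <= n - 2),
      (forall i, 1 <= i -> i < s -> m i < m i.+1) &
      (forall i, s < i <= K -> m i = n.-1)].

Definition is_config (m : nat -> nat) : Prop := exists s, config s m.

Definition rises_to_top (m : nat -> nat) : Prop :=
  (forall t, 1 <= t <= K -> 1 <= m t <= n.-1) /\
  (forall t1 t2, 1 <= t1 -> t1 < t2 -> t2 <= K ->
     m t1 < m t2 \/ m t1 = n.-1 /\ m t2 = n.-1).

Definition same_entries (m m' : nat -> nat) : Prop :=
  forall i, 1 <= i <= K -> m i = m' i.

Definition coord (m : nat -> nat) (r : nat) : nat :=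
  if r == 0 then 0 else if r <= K then m r else n.-1.

Definition base_config (s : nat) : nat -> nat := fun i => if i <= s then i else n.-1.

Lemma config_entry s m u : config s m -> 1 <= u <= K ->
  (u <= s /\ 1 <= m u <= n - 2) \/ (s < u /\ m u = n.-1).
Proof.
case=> sK h _ ht hu; case: (leqP u s) => us.
  by left; split => //; apply: h; lia.
by right; split => //; apply: ht; lia.
Qed.

Lemma config_mono s m a b : config s m -> 1 <= a -> a < b -> b <= s -> m a < m b.
Proof.
case=> _ _ hs _ a1; elim: b => // b IH; rewrite ltnS leq_eqVlt => /orP [/eqP <-|ab] bs.
  exact: hs.
by apply: ltn_trans (IH ab (ltnW bs)) (hs b _ bs); lia.
Qed.

Lemma config_ge s m i : config s m -> 1 <= i <= s -> i <= m i.
Proof.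
move=> cf; elim: i => // i IH /andP [_ hi]; case: i IH hi => [|i] IH hi.
  by case: cf => _ h _ _; have := h 1; lia.
have := config_mono cf (ltn0Sn i) (ltnSn i.+1) hi; have := IH ltac:(lia); lia.
Qed.

(* Configurations are the sequences in [1, n-1] rising strictly to the top;
   the number s of proper entries is found as the first top position. *)
Lemma configP m : is_config m <-> rises_to_top m.
Proof.
split.
  move=> [s cf]; split => [t ht|t1 t2 h1 h2 h3].
    by case: (config_entry cf ht); lia.
  case: (config_entry cf (_ : 1 <= t1 <= K)) => [|[b1 b2]|[b1 b2]]; first lia;
  case: (config_entry cf (_ : 1 <= t2 <= K)) => [|[a1 a2]|[a1 a2]]; try lia.
  by left; apply: (config_mono cf).
move=> [hb hm].
have exP : exists t, (0 < t) && ((K < t) || (m t == n.-1)) by exists K.+1; rewrite ltnSn.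
case: (ex_minnP exP) => t0 /andP [t01 top] tmin.
have below t : 1 <= t < t0 -> t <= K /\ 1 <= m t <= n - 2.
  move=> /andP [t1 tt0].
  have : ~~ ((K < t) || (m t == n.-1)).
    by apply: contraL tt0 => Pt; rewrite -leqNgt tmin // t1.
  by rewrite negb_or -leqNgt => /andP [tK /eqP mt]; have := hb t; lia.
exists t0.-1; split.
- by case/orP: top => [|/eqP]; have := below t0.-1; lia.
- by move=> i hi; have := below i; lia.
- move=> i i1 i2; have [iK mi] : i <= K /\ 1 <= m i <= n - 2 by apply: below; lia.
  have [iK' mi'] : i.+1 <= K /\ 1 <= m i.+1 <= n - 2 by apply: below; lia.
  by case: (hm i i.+1 i1 (ltnSn i) iK'); lia.
- move=> i hi; case/orP: top => [|/eqP top]; first lia.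
  have := hb i ltac:(lia); case: (ltngtP t0 i) => [lt|gt|<-] //; last lia.
  by case: (hm t0 i t01 lt ltac:(lia)); lia.
Qed.

Lemma config_base s : s <= K -> config s (base_config s).
Proof.
move=> sK; split => //.
- by move=> i /andP [i1 i2]; rewrite /base_config i2; lia.
- by move=> i i1 i2; rewrite /base_config (ltnW i2) i2.
- by move=> i /andP [i1 i2]; rewrite /base_config leqNgt i1.
Qed.

(* Psi is a function on configurations commuting with h_j and with every
   sigma_i applicable to all entries; it arises from a morphism of the dual
   restricted to the homomorphisms factoring through a fixed one (see
   [phi_eval_factors]). *)
Variables (c : nat -> bool) (j : nat).
Hypothesis n4 : 4 <= n.
Hypothesis hj : 1 <= j <= n - 2.
Variable Psi : (nat -> nat) -> nat.
Hypothesis Psi_ext : forall m m', same_entries m m' -> Psi m = Psi m'.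
Hypothesis Psi_lt : forall m, is_config m -> Psi m < n.
Hypothesis Psi_h :
  forall m, is_config m -> Psi (hmap n j \o m) = hmap n j (Psi m).
Hypothesis Psi_sigma : forall i, 1 <= i <= n - 3 -> forall m, is_config m ->
  (forall t, 1 <= t <= K -> pdom c i (m t)) ->
  pdom c i (Psi m) /\ Psi (Defs.pmap c i \o m) = Defs.pmap c i (Psi m).

Definition is_coord (m : nat -> nat) (r : nat) : Prop := Psi m = coord m r.

(* Being a coordinate is invariant under changing irrelevant entries, and is
   transported along h_j and along every sigma_i (in both directions, as
   sigma_i is injective on its domain). *)
Lemma is_coord_ext m m' r : same_entries m m' -> is_coord m r -> is_coord m' r.
Proof.
move=> ha; rewrite /is_coord (Psi_ext ha) /coord => ->.
by case: eqP => // r0; case: ifP => // hr; apply: ha; lia.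
Qed.

Lemma is_coord_h m r : is_config m -> is_coord m r -> is_coord (hmap n j \o m) r.
Proof.
move=> vm; rewrite /is_coord Psi_h // => ->; rewrite /coord.
case: eqP => _; first by rewrite hmap0 //; lia.
by case: ifP => //= _; rewrite hmapT.
Qed.

Lemma is_coord_sigma i m r : 1 <= i <= n - 3 -> is_config m ->
  (forall t, 1 <= t <= K -> pdom c i (m t)) ->
  is_coord m r <-> is_coord (Defs.pmap c i \o m) r.
Proof.
move=> hi vm am; rewrite /is_coord.
have [dP ->] := Psi_sigma hi vm am.
have -> : coord (Defs.pmap c i \o m) r = Defs.pmap c i (coord m r).
  rewrite /coord; case: eqP => _; first by rewrite pmap0 //; lia.
  by case: ifP => //= _; rewrite (pmapT c hi).
split=> [->|] //; apply: pmap_inj => //; rewrite /coord.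
case: eqP => r0; first by apply: pdom0; lia.
by case: ifP => hr; [apply: am; lia | exact: pdomT].
Qed.

(* Two configurations differing only at position i, where the entry t+1 of
   m is lowered to t, with the values t, t+1 occurring nowhere else, are
   related by sigma_t (as f_t or g_t), so Psi is a coordinate at both or at
   neither. *)
Lemma is_coord_lower i t m m' r : 1 <= t <= n - 3 -> is_config m -> is_config m' ->
  m i = t.+1 -> m' i = t -> (forall u, u != i -> m' u = m u) ->
  (forall u, 1 <= u <= K -> u != i -> m u != t /\ m u != t.+1) ->
  is_coord m r <-> is_coord m' r.
Proof.
move=> ht vm vm' mi mi' mu fresh.
have ctE : forall k, Defs.pmap c t k = (if c t then fmap t k else gmap t k).
  by move=> k; rewrite /Defs.pmap.
case ct: (c t).
- have av : forall u, 1 <= u <= K -> pdom c t (m' u).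
    move=> u hu; rewrite /pdom ct /fdom; case: (eqVneq u i) => [->|ui].
      by rewrite mi'; apply/eqP; lia.
    by rewrite mu //; case: (fresh u hu ui).
  rewrite (is_coord_sigma r ht vm' av); split; apply: is_coord_ext => u hu;
    rewrite /= ctE ct /fmap; case: (eqVneq u i) => [->|ui];
    rewrite ?mi ?mi' ?eqxx // mu //; have [/negbTE -> _] := fresh u hu ui => //.
- have av : forall u, 1 <= u <= K -> pdom c t (m u).
    move=> u hu; rewrite /pdom ct /gdom; case: (eqVneq u i) => [->|ui].
      by rewrite mi; apply/eqP; lia.
    by case: (fresh u hu ui).
  rewrite (is_coord_sigma r ht vm av); split; apply: is_coord_ext => u hu;
    rewrite /= ctE ct /gmap; case: (eqVneq u i) => [->|ui];
    rewrite ?mi ?mi' ?eqxx // mu //; have [_ /negbTE ->] := fresh u hu ui => //.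
Qed.

Lemma config_lower s m i r : config s m -> 1 <= i <= s -> i < m i ->
  (forall k, 1 <= k < i -> m k = k) ->
  let m' := fun k => if k == i then (m i).-1 else m k in
  config s m' /\ (is_coord m r <-> is_coord m' r).
Proof.
move=> cf hi im below m'; have [sK hb hs ht] := cf.
have mi : m i <= n - 2 by have := hb i hi; lia.
have cf' : config s m'.
  split => // [u hu|u u1 us|u hu]; rewrite /m'.
  - by case: ifP => _; [lia | exact: hb].
  - case: (u =P i) => [eu|nu]; case: (u.+1 =P i) => [eu'|nu'].
    + lia.
    + by subst u; have := hs i u1 us; lia.
    + by rewrite below; lia.
    + exact: hs.
  - by case: ifP => /eqP eu; [lia | exact: ht].
split=> //; apply: (is_coord_lower (i := i) (t := (m i).-1)); rewrite /m' ?eqxx //.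
- lia.
- by exists s.
- by exists s.
- lia.
- by move=> u ui; rewrite (negbTE ui).
- move=> u hu ui; case: (ltngtP u i) => [lt|gt|eq]; last by rewrite eq eqxx in ui.
    by rewrite below; lia.
  case: (leqP u s) => us; first by have := config_mono cf (_ : 1 <= i) gt us; lia.
  by rewrite ht; lia.
Qed.

(* The measure for lowering entries: the sum of the first s entries. *)
Fixpoint entry_sum (m : nat -> nat) (s : nat) : nat :=
  if s is s'.+1 then m s + entry_sum m s' else 0.

Lemma entry_sum_lower m m' i s : (forall k, m k = m' k + (k == i)) ->
  entry_sum m s = entry_sum m' s + (0 < i <= s).
Proof.
move=> hk; elim: s => [|s IH] /=; first by case: i hk.
by rewrite IH hk; case: eqP => [<-|ne]; case: (leqP i s); lia.
Qed.

(* Psi is a coordinate at a configuration iff it is at the base configuration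
   with the same number of proper entries: lower entries one at a time. *)
Lemma is_coord_slide s m r : config s m -> (is_coord m r <-> is_coord (base_config s) r).
Proof.
suff H N : forall m, entry_sum m s < N -> config s m ->
    (is_coord m r <-> is_coord (base_config s) r) by apply: H (ltnSn _).
elim: N => // N IH {}m hN cf.
case: (boolP [exists k : 'I_s.+1, (0 < k) && (m k != k)]) => [ex|nex]; last first.
  have ag : same_entries m (base_config s).
    move=> u hu; rewrite /base_config; case: (config_entry cf hu) => [[us _]|[us ->]].
      rewrite us; apply/eqP; apply: contraNT nex => ne; apply/existsP.
      by exists (Ordinal (n := s.+1) (m := u) ltac:(lia)) => /=; rewrite ne; lia.
    by rewrite leqNgt us.
  by split; apply: is_coord_ext => // u /ag ->.
have exP : exists k, (0 < k <= s) && (m k != k).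
  by case/existsP: ex => k /andP [k1 k2]; exists k; rewrite k1 k2 -ltnS ltn_ord.
case: (ex_minnP exP) => i /andP [hi mi] imin.
have below k : 1 <= k < i -> m k = k.
  case/andP=> k1 ki; apply/eqP; apply: contraTT (ki) => nk.
  by rewrite -leqNgt imin // nk andbT k1; lia.
have im : i < m i by have := config_ge cf hi; move: mi; case: ltngtP.
have [cf' ->] := config_lower r cf hi im below; apply: (IH _ _ cf').
move: hN; rewrite (entry_sum_lower (m' := fun k => if k == i then (m i).-1 else m k) (i := i)).
  by lia.
by move=> k; case: eqP => [->|]; lia.
Qed.

(* Removing the last proper entry: the configuration 1, .., s-1, n-2 behaves
   like base_config s by [is_coord_slide], and h_j sends it to a configuration
   with s-1 proper entries, since j <= n-2 pushes n-2 to the top. *)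
Lemma is_coord_drop s r : 1 <= s <= K ->
  is_coord (base_config s) r -> is_coord (base_config s.-1) r.
Proof.
move=> hs g.
pose C i := if i < s then i else if i == s then n - 2 else n.-1.
have Clow i : i < s -> C i = i by rewrite /C => ->.
have Cs : C s = n - 2 by rewrite /C ltnn eqxx.
have Chigh i : s < i -> C i = n.-1.
  by move=> h; rewrite /C ltnNge (ltnW h) /= ifN_eq // gtn_eqF.
have cC : config s C.
  split => [|i hi|i i1 i2|i hi]; try lia.
  - by case: (ltngtP i s) => [/Clow|?|->]; rewrite ?Cs; lia.
  - by rewrite Clow //; case: (ltngtP i.+1 s) => [/Clow|?|->]; rewrite ?Cs; lia.
  - by rewrite Chigh //; lia.
have ch : config s.-1 (hmap n j \o C).
  split => [|i hi|i i1 i2|i hi]; rewrite /= /hmap; try lia.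
  - by rewrite Clow; [case: ifP|]; lia.
  - by rewrite !Clow; [case: ifP; case: ifP| |]; lia.
  - case: (ltngtP i s) => [?|/Chigh ->|->]; [lia | by rewrite ltnn andbF |].
    by rewrite Cs ifT //; lia.
apply/(is_coord_slide r ch)/is_coord_h; first by exists s.
exact/(is_coord_slide r cC).
Qed.

Lemma is_coord_all_base r : is_coord (base_config K) r ->
  forall m, is_config m -> is_coord m r.
Proof.
move=> g m [s cf]; apply/(is_coord_slide r cf).
have [sK _ _ _] := cf; rewrite -(subKn sK).
elim: (K - s) (leq_subr s K) => [|d IH] hd; first by rewrite subn0.
rewrite subnS; apply: is_coord_drop; first lia.
by apply: IH; lia.
Qed.

Lemma is_coord_of_value m : Psi m <= K \/ Psi m = n.-1 ->
  (forall r, 1 <= r <= K -> m r = r) -> exists r, r <= K.+1 /\ is_coord m r.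
Proof.
rewrite /is_coord /coord => - [h|h] mE.
  exists (Psi m); split; first lia.
  by case: eqP => // /eqP p0; rewrite h mE // lt0n p0.
by exists K.+1; rewrite ltnn h.
Qed.

(* If K < n-3, every sigma_i with K < i fixes base_config K, hence Psi there
   is a fixed point of sigma_i; so Psi avoids K+1, .., n-2. *)
Lemma base_value_short : K < n - 3 ->
  Psi (base_config K) <= K \/ Psi (base_config K) = n.-1.
Proof.
move=> hK3; have vB : is_config (base_config K) by exists K; exact: config_base.
set v := Psi (base_config K).
case: (leqP v K) => vK; first by left.
case: (v =P n.-1) => vt; [by right | exfalso].
pose i := if v <= n - 3 then v else n - 3.
have hi : 1 <= i <= n - 3 by rewrite /i; case: ifP; lia.
have av : forall t, 1 <= t <= K -> pdom c i (base_config K t).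
  move=> t /andP [t1 t2]; rewrite /pdom /fdom /gdom /base_config t2 /i.
  by case: (c _); case: ifP => _; apply/eqP; lia.
have [dv pv] := Psi_sigma hi vB av.
have : Defs.pmap c i v = v.
  rewrite -pv; apply: Psi_ext => t /andP [t1 t2].
  rewrite /= /base_config t2 /Defs.pmap /fmap /gmap /i.
  by case: (c _); rewrite ifF //; apply/eqP; case: ifP; lia.
have := Psi_lt vB; rewrite -/v => vn /(pmap_fix dv); rewrite /i; case: ifP; lia.
Qed.

(* If K = n-3, the configuration skipping the value e (e = 2 if sigma_1 = f_1,
   e = 1 if sigma_1 = g_1) lies in the domain of sigma_1, so Psi there
   misses e and is a coordinate. *)
Lemma base_gap : K = n - 3 -> exists r, r <= K.+1 /\ is_coord (base_config K) r.
Proof.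
move=> hK3; pose e := if c 1 then 2 else 1.
pose M i := if i < e then i else if i <= K then i.+1 else n.-1.
have e12 : 1 <= e <= 2 by rewrite /e; case: (c 1).
have cM : config K M.
  by split => // [i hi|i i1 i2|i hi]; rewrite /M; repeat case: ifP => ?; lia.
have av : forall t, 1 <= t <= K -> pdom c 1 (M t).
  move=> t /andP [t1 t2]; rewrite /pdom /fdom /gdom /M /e.
  by case: (c 1); rewrite ?t2; case: ifP; lia.
have h1 : 1 <= 1 <= n - 3 by lia.
have [dv _] := Psi_sigma h1 (ex_intro _ K cM) av.
have hM := Psi_lt (ex_intro _ K cM).
have ve : Psi M != e by move: dv; rewrite /pdom /fdom /gdom /e; case: (c 1).
suff [r [rK gr]] : exists r, r <= K.+1 /\ is_coord M r.
  by exists r; split => //; apply/(is_coord_slide r cM).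
rewrite /is_coord /coord; set v := Psi M in hM ve *.
case: (v =P 0) => v0; first by exists 0.
case: (v =P n.-1) => vt; first by exists K.+1; rewrite ltnn.
exists (if v < e then v else v.-1); split; first by case: ifP; lia.
by rewrite /M; case: (ltnP v e) => ?; repeat case: ifP => ?; lia.
Qed.

Theorem config_coord : exists r, r <= K.+1 /\ forall m, is_config m -> is_coord m r.
Proof.
suff [r [rK g]] : exists r, r <= K.+1 /\ is_coord (base_config K) r.
  by exists r; split => //; apply: is_coord_all_base.
have bE r : 1 <= r <= K -> base_config K r = r.
  by case/andP=> _ rK; rewrite /base_config rK.
case: (ltngtP K (n - 3)) => hK3.
- exact/is_coord_of_value/bE/base_value_short.
- apply: is_coord_of_value bE; have := Psi_lt (ex_intro _ K (config_base (leqnn K))); lia.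
- exact: base_gap.
Qed.
End Configurations.

Definition witness (T : Type) (d : T) (P : T -> Prop) : T :=
  match boolp.pselect (exists t, P t) with
  | left H => proj1_sig (boolp.cid H)
  | right _ => d
  end.

Lemma witnessP (T : Type) (d : T) (P : T -> Prop) : (exists t, P t) -> P (witness d P).
Proof. by rewrite /witness; case: boolp.pselect => // H _; case: boolp.cid. Qed.

Lemma exists_minimizer (T : Type) (P : T -> Prop) (f : T -> nat) :
  (exists t, P t) -> exists2 t0, P t0 & forall t, P t -> f t0 <= f t.
Proof.
move=> [t Pt].
have ex : exists k, boolp.asbool (exists t, P t /\ f t = k).
  by exists (f t); apply/boolp.asboolP; exists t.
case: (ex_minnP ex) => k /boolp.asboolP [t0 [Pt0 <-]] kmin.
by exists t0 => // t' Pt'; apply: kmin; apply/boolp.asboolP; exists t'.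
Qed.

Section Homomorphisms.
Variables (n : nat) (A : HAlg).
Local Notation D := (DA n (A := A)).

Lemma hom_lt x : D x -> forall a, x a < n. Proof. by case. Qed.
Lemma hom_bot x : D x -> x (hbot A) = 0. Proof. by case=> _ _ _ _ []. Qed.
Lemma hom_top x : D x -> x (htop A) = n.-1. Proof. by case=> _ _ _ _ []. Qed.
Lemma hom_meet x : D x -> forall a b, x (hmeet a b) = minn (x a) (x b). Proof. by case. Qed.
Lemma hom_join x : D x -> forall a b, x (hjoin a b) = maxn (x a) (x b). Proof. by case. Qed.
Lemma hom_imp x : D x -> forall a b, x (himp a b) = cimp n (x a) (x b). Proof. by case. Qed.

(* Homomorphisms A -> C_n form a closed subset of C_n^A: the defining
   identities each involve finitely many coordinates. *)
Lemma hom_closed : fin_closed D.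
Proof.
move=> z h; split.
- move=> a; have [k [Dk hk]] := h [:: a]; rewrite -hk /=; [exact: hom_lt | tauto].
- move=> a b; have [k [Dk hk]] := h [:: hmeet a b; a; b].
  by rewrite -!hk /= ?(hom_meet Dk) //; tauto.
- move=> a b; have [k [Dk hk]] := h [:: hjoin a b; a; b].
  by rewrite -!hk /= ?(hom_join Dk) //; tauto.
- move=> a b; have [k [Dk hk]] := h [:: himp a b; a; b].
  by rewrite -!hk /= ?(hom_imp Dk) //; tauto.
- have [k [Dk hk]] := h [:: hbot A; htop A].
  by rewrite -!hk /= ?(hom_bot Dk) ?(hom_top Dk) //; tauto.
Qed.

Lemma hom_relabel x (r : nat -> nat) : D x ->
  r 0 = 0 -> r n.-1 = n.-1 -> (forall a, r (x a) < n) ->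
  (forall a b, x a <= x b -> r (x a) <= r (x b)) ->
  (forall a b, x a < x b -> r (x a) < r (x b) \/ r (x a) = n.-1) ->
  D (r \o x).
Proof.
move=> Dx r0 rt rb rm rs; split => //= [a b|a b|a b|].
- rewrite (hom_meet Dx); case: (leqP (x a) (x b)) => h.
    by apply/esym/minn_idPl/rm.
  by apply/esym/minn_idPr/rm/ltnW.
- rewrite (hom_join Dx); case: (leqP (x a) (x b)) => h.
    by apply/esym/maxn_idPr/rm.
  by apply/esym/maxn_idPl/rm/ltnW.
- rewrite (hom_imp Dx) /cimp /ctop; case: (leqP (x a) (x b)) => h.
    by rewrite (rm _ _ h) rt.
  have := rs _ _ h; have := rm _ _ (ltnW h); have := rb a; have := rb b.
  by case: (leqP (r (x a)) (r (x b))); lia.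
- by rewrite (hom_bot Dx) (hom_top Dx) r0 rt.
Qed.

Lemma hom_collapse x k : D x -> 0 < k ->
  D ((fun u => if k <= u then n.-1 else u) \o x).
Proof.
move=> Dx k0; have xb := hom_lt Dx.
apply: (hom_relabel Dx) => [|||a b h|a b h] /=.
- by rewrite leqNgt k0.
- by case: ifP.
- by move=> a; have := xb a; case: ifP; lia.
- by have := xb a; have := xb b; case: ifP; case: ifP; lia.
- by have := xb a; have := xb b; case: ifP; case: ifP; lia.
Qed.

Definition factors (w x : A -> nat) : Prop := forall a b, x a = x b -> w a = w b.

(* A homomorphism factoring through another is a monotone relabelling of it,
   strictly monotone below the top (use the identities a -> b = 1 and
   (b -> a) = a when x a < x b). *)
Lemma factors_le x w : D x -> D w -> factors w x ->
  forall a b, x a <= x b -> w a <= w b.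
Proof.
move=> Dx Dw f a b h.
have : w (himp a b) = w (htop A).
  by apply: f; rewrite (hom_imp Dx) (hom_top Dx) /cimp h.
rewrite (hom_imp Dw) (hom_top Dw) /cimp /ctop; case: leqP => // h2.
by have := hom_lt Dw a; lia.
Qed.

Lemma factors_lt x w : D x -> D w -> factors w x ->
  forall a b, x a < x b -> w a < w b \/ w a = n.-1.
Proof.
move=> Dx Dw f a b h.
have : w (himp b a) = w a by apply: f; rewrite (hom_imp Dx) /cimp leqNgt h.
by rewrite (hom_imp Dw) /cimp /ctop; case: leqP => h2 h3; [right|left]; lia.
Qed.

Definition biimp (a b : A) : A := hmeet (himp a b) (himp b a).

Lemma hom_biimp x a b : D x ->
  x (biimp a b) = if x a == x b then n.-1 else minn (x a) (x b).
Proof.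
move=> Dx; rewrite /biimp (hom_meet Dx) !(hom_imp Dx) /cimp /ctop.
have := hom_lt Dx a; have := hom_lt Dx b.
case: eqP => [->|ne]; first by rewrite leqnn minnn.
by case: (leqP (x a) (x b)); case: (leqP (x b) (x a)); lia.
Qed.

(* The lattice median, a near-unanimity term for the chain C_n. *)
Definition median (a b d : A) : A := hjoin (hjoin (hmeet a b) (hmeet b d)) (hmeet a d).

Lemma hom_median x a b d : D x -> x (median a b d) =
  maxn (maxn (minn (x a) (x b)) (minn (x b) (x d))) (minn (x a) (x d)).
Proof. by move=> Dx; rewrite /median !(hom_join Dx) !(hom_meet Dx). Qed.

Inductive in_lattice (F : list A) : A -> Prop :=
| in_lattice_base a : In a F -> in_lattice F a
| in_lattice_meet a b : in_lattice F a -> in_lattice F b -> in_lattice F (hmeet a b)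
| in_lattice_join a b : in_lattice F a -> in_lattice F b -> in_lattice F (hjoin a b).

Lemma in_lattice_agree F x y b : D x -> D y -> agree_on F x y -> in_lattice F b -> x b = y b.
Proof.
move=> Dx Dy ag; elim => [a /ag //|a b' _ IHa _ IHb|a b' _ IHa _ IHb].
  by rewrite (hom_meet Dx) (hom_meet Dy) IHa IHb.
by rewrite (hom_join Dx) (hom_join Dy) IHa IHb.
Qed.

End Homomorphisms.

(* With K the number of values of x strictly
   between 0 and n-1, the homomorphisms factoring through x are exactly the
   relabellings of x by configurations of length K. *)
Section Factoring.
Variables (n : nat) (A : HAlg) (x : A -> nat).
Hypothesis n2 : 1 < n.
Hypothesis Dx : DA n x.

Definition mid_values : seq nat :=
  [seq u <- iota 1 (n - 2) | boolp.asbool (exists a, x a = u)].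

Definition nmid : nat := size mid_values.

(* The t-th middle value (1-based) is sent to m t; 0 and n-1 are fixed. *)
Definition relabel (m : nat -> nat) (u : nat) : nat :=
  if u == 0 then 0 else if u == n.-1 then n.-1 else m (index u mid_values).+1.

Definition through (m : nat -> nat) : A -> nat := relabel m \o x.

Definition preimage (u : nat) : A := witness (hbot A) (fun a => x a = u).

Lemma mem_mid_values u :
  (u \in mid_values) = (1 <= u <= n - 2) && boolp.asbool (exists a, x a = u).
Proof. by rewrite mem_filter mem_iota andbC; congr (_ && _); apply/idP/idP; lia. Qed.

Lemma nmid_le : nmid <= n - 2.
Proof. by rewrite /nmid size_filter (leq_trans (count_size _ _)) // size_iota. Qed.

Lemma mid_value_in a : 0 < x a < n.-1 -> x a \in mid_values.
Proof.
by move=> h; rewrite mem_mid_values; apply/andP; split; [lia | apply/boolp.asboolP; exists a].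
Qed.

Lemma mid_index a : 0 < x a < n.-1 -> 1 <= (index (x a) mid_values).+1 <= nmid.
Proof. by move/mid_value_in; rewrite -index_mem. Qed.

Lemma nth_mid_range t : t < nmid -> 1 <= nth 0 mid_values t <= n - 2.
Proof. by move/(mem_nth 0); rewrite mem_mid_values => /andP []. Qed.

Lemma preimage_nth t : t < nmid -> x (preimage (nth 0 mid_values t)) = nth 0 mid_values t.
Proof.
move/(mem_nth 0); rewrite mem_mid_values => /andP [_ /boolp.asboolP ex].
exact: (witnessP (hbot A) ex).
Qed.

Lemma nth_mid_mono t1 t2 : t1 < t2 -> t2 < nmid -> nth 0 mid_values t1 < nth 0 mid_values t2.
Proof.
move=> h1 h2; have srt : sorted ltn mid_values.
  exact: (sorted_filter ltn_trans _ (iota_ltn_sorted _ _)).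
by apply: (sorted_ltn_nth ltn_trans 0 srt) => //; rewrite inE -/nmid; lia.
Qed.

Lemma index_mid_mono a b : 0 < x a < n.-1 -> 0 < x b < n.-1 -> x a < x b ->
  index (x a) mid_values < index (x b) mid_values.
Proof.
move=> /mid_value_in ha /mid_value_in hb ab; rewrite ltnNge; apply/negP.
rewrite leq_eqVlt => /orP [/eqP e|h].
  by have := congr1 (nth 0 mid_values) e; rewrite !nth_index //; lia.
have := nth_mid_mono h; rewrite /nmid index_mem ha !nth_index //; lia.
Qed.

Lemma through_ext m m' : same_entries nmid m m' -> through m = through m'.
Proof.
move=> ag; apply: boolp.funext => a; rewrite /through /relabel /=.
case: (x a =P 0) => // h0; case: (x a =P n.-1) => // ht.
by apply/ag/mid_index; have := hom_lt Dx a; lia.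
Qed.

Lemma through_comp (r : nat -> nat) m : r 0 = 0 -> r n.-1 = n.-1 ->
  through (r \o m) = r \o through m.
Proof.
move=> r0 rt; apply: boolp.funext => a; rewrite /through /relabel /=.
by case: (x a =P 0) => // h0; case: (x a =P n.-1).
Qed.

Lemma through_values m a : through m a = 0 \/ through m a = n.-1 \/
  exists2 t, 1 <= t <= nmid & through m a = m t.
Proof.
rewrite /through /relabel /=; case: (x a =P 0) => h0; first by left.
case: (x a =P n.-1) => ht; first by right; left.
right; right; exists (index (x a) mid_values).+1 => //.
by apply/mid_index; have := hom_lt Dx a; lia.
Qed.

Lemma through_hom m : is_config n nmid m -> DA n (through m).
Proof.
move/(configP n2 nmid_le) => [hb hm]; have xb := hom_lt Dx.
have rng a : x a <> 0 -> x a <> n.-1 -> 1 <= m (index (x a) mid_values).+1 <= n.-1.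
  by move=> h0 ht; apply/hb/mid_index; have := xb a; lia.
have rlt a b : x a < x b ->
    relabel m (x a) < relabel m (x b) \/
    relabel m (x a) = n.-1 /\ relabel m (x b) = n.-1.
  move=> h; rewrite /relabel; have xa := xb a; have xb' := xb b.
  case: (x a =P 0) => ha; case: (x b =P 0) => hb0; case: (x a =P n.-1) => hat;
    case: (x b =P n.-1) => hbt; try lia.
  - by have := rng b hb0 hbt; lia.
  - by have := rng a ha hat; lia.
  - have ia : 0 < x a < n.-1 by lia.
    have ib : 0 < x b < n.-1 by lia.
    have /andP [ia1 _] := mid_index ia; have /andP [_ ib2] := mid_index ib.
    have il : (index (x a) mid_values).+1 < (index (x b) mid_values).+1.
      by rewrite ltnS; exact: index_mid_mono.
    by case: (hm _ _ ia1 il ib2); lia.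
apply: (hom_relabel Dx).
- by rewrite /relabel eqxx.
- by rewrite /relabel ifN_eq ?eqxx //; lia.
- move=> a; rewrite /relabel; have := xb a.
  by case: (x a =P 0) => h0; case: (x a =P n.-1) => ht; try lia; have := rng a h0 ht; lia.
- by move=> a b; rewrite leq_eqVlt => /orP [/eqP -> //|/rlt]; lia.
- by move=> a b /rlt; lia.
Qed.

(* Every homomorphism factoring through x is the relabelling of x along the
   configuration listing its values at the middle values of x. *)
Lemma factor_through w : DA n w -> factors w x ->
  exists2 m, is_config n nmid m & w = through m.
Proof.
move=> Dw fw; pose m t := w (preimage (nth 0 mid_values t.-1)).
have mid t : 1 <= t <= nmid ->
    0 < x (preimage (nth 0 mid_values t.-1)) < n.-1.
  move=> ht; have ht' : t.-1 < nmid by lia.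
  by rewrite preimage_nth //; have := nth_mid_range ht'; lia.
exists m.
  apply/(configP n2 nmid_le); split => [t ht|t1 t2 h1 h2 h3].
    have := factors_lt Dx Dw fw (a := hbot A) (b := preimage (nth 0 mid_values t.-1)).
    rewrite (hom_bot Dx) (hom_bot Dw) => /(_ (proj1 (andP (mid t ht)))).
    by have := hom_lt Dw (preimage (nth 0 mid_values t.-1)); rewrite /m; lia.
  have hlt : x (preimage (nth 0 mid_values t1.-1)) < x (preimage (nth 0 mid_values t2.-1)).
    by rewrite !preimage_nth; try apply: nth_mid_mono; lia.
  have := factors_le Dx Dw fw (ltnW hlt); have := factors_lt Dx Dw fw hlt.
  by have := hom_lt Dw (preimage (nth 0 mid_values t2.-1)); rewrite /m; lia.
apply: boolp.funext => b; rewrite /through /relabel /=.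
case: (x b =P 0) => h0.
  by rewrite -(hom_bot Dw); apply: fw; rewrite h0 (hom_bot Dx).
case: (x b =P n.-1) => ht.
  by rewrite -(hom_top Dw); apply: fw; rewrite ht (hom_top Dx).
have hb : 0 < x b < n.-1 by have := hom_lt Dx b; lia.
apply: fw; rewrite /= preimage_nth ?nth_index ?mid_value_in //.
by rewrite /nmid index_mem mid_value_in.
Qed.

Lemma coord_through r : r <= nmid.+1 ->
  exists a, forall m, coord n nmid m r = through m a.
Proof.
move=> hr; rewrite /coord /through /relabel.
case: (r =P 0) => r0.
  by exists (hbot A) => m; rewrite /= (hom_bot Dx).
case: (leqP r nmid) => rK; last first.
  exists (htop A) => m; rewrite /= (hom_top Dx) ifN_eq ?eqxx //; lia.
have hr' : r.-1 < nmid by lia.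
exists (preimage (nth 0 mid_values r.-1)) => m /=.
have := nth_mid_range hr'; rewrite preimage_nth // => hv.
rewrite !ifN_eq; try lia.
rewrite index_uniq ?prednK //; try lia.
exact/filter_uniq/iota_uniq.
Qed.
End Factoring.

Section Morphism.
Variables (n : nat) (c : nat -> bool) (j : nat) (A : HAlg).
Hypothesis n4 : 4 <= n.
Hypothesis hj : 1 <= j <= n - 2.
Local Notation D := (DA n (A := A)).

Variable phi : (A -> nat) -> nat.
Hypothesis Hphi : alter_morphism n c j phi.

Lemma phi_lt x : D x -> phi x < n.
Proof. by case: Hphi => h _ _ _; apply: h. Qed.

Lemma phi_h x : D x -> phi (hmap n j \o x) = hmap n j (phi x).
Proof. by case: Hphi => _ _ h _; apply: h. Qed.

Lemma phi_sigma i x : 1 <= i <= n - 3 -> D x -> (forall a, pdom c i (x a)) ->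
  pdom c i (phi x) /\ phi (Defs.pmap c i \o x) = Defs.pmap c i (phi x).
Proof. by move=> hi Dx av; case: Hphi => _ _ _ h; exact: h. Qed.

(* Restricted to the homomorphisms factoring through a fixed x, phi is an
   evaluation: transport phi to configurations and apply [config_coord]. *)
Lemma phi_eval_factors x : D x ->
  exists a, forall w, D w -> factors w x -> phi w = w a.
Proof.
move=> Dx; have n2 : 1 < n by lia.
have hK := nmid_le n x.
pose Psi m := phi (through n x m).
have DPsi m : is_config n (nmid n x) m -> D (through n x m) by apply: through_hom.
have Psi_ext m m' : same_entries (nmid n x) m m' -> Psi m = Psi m'.
  by move=> ag; rewrite /Psi (through_ext n2 Dx ag).
have Psi_lt m : is_config n (nmid n x) m -> Psi m < n by move/DPsi/phi_lt.
have Psi_h m : is_config n (nmid n x) m -> Psi (hmap n j \o m) = hmap n j (Psi m).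
  have j1 : 1 <= j by lia.
  move=> vm; rewrite /Psi (through_comp x m (hmap0 n j1) (hmapT n j)).
  by rewrite phi_h //; exact: DPsi.
have Psi_sigma i : 1 <= i <= n - 3 -> forall m, is_config n (nmid n x) m ->
    (forall t, 1 <= t <= nmid n x -> pdom c i (m t)) ->
    pdom c i (Psi m) /\ Psi (Defs.pmap c i \o m) = Defs.pmap c i (Psi m).
  move=> hi m vm av; have i1 : 1 <= i by lia.
  rewrite /Psi (through_comp x m (pmap0 c i1) (pmapT c hi)).
  apply: phi_sigma (DPsi _ vm) _ => // a.
  case: (through_values n2 Dx m a) => [->|[->|[t ht ->]]]; last exact: av.
    by apply: pdom0; lia.
  exact: pdomT.
have [r [rK Pr]] := config_coord n2 hK n4 hj Psi_ext Psi_lt Psi_h Psi_sigma.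
have [a ha] := coord_through n2 Dx rK.
exists a => w Dw fw; have [m vm ->] := factor_through n2 Dx Dw fw.
by rewrite -ha -(Pr m vm).
Qed.

(* Collapsing the values
   of x from x q0 upwards gives a homomorphism factoring through both x and
   y, so a1 and a2 agree modulo the collapse: x q0 <= x (a1 <-> a2). *)
Lemma pair_key x y a1 a2 q0 : D x -> D y ->
  (forall w, D w -> factors w x -> phi w = w a1) ->
  (forall w, D w -> factors w y -> phi w = w a2) ->
  y q0 = n.-1 -> (forall q, y q = n.-1 -> x q0 <= x q) ->
  x q0 <= x (biimp a1 a2).
Proof.
move=> Dx Dy N1 N2 yq0 q0min; have xb := hom_lt Dx.
case: (posnP (x q0)) => [-> //|k0].
pose z := (fun u => if x q0 <= u then n.-1 else u) \o x.
have Dz : D z by exact: hom_collapse.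
have fzx : factors z x by move=> b d h; rewrite /z /= h.
have fzy : factors z y.
  move=> b d h; have := q0min (biimp b d).
  rewrite (hom_biimp _ _ Dy) (hom_biimp _ _ Dx) h eqxx => /(_ erefl).
  by rewrite /z /=; have := xb b; have := xb d; case: eqP => [->|_] //; do 2 case: ifP; lia.
have := N1 z Dz fzx; rewrite (N2 z Dz fzy) /z /= (hom_biimp _ _ Dx).
have := xb a1; have := xb a2; have := xb q0.
by case: eqP => [->|ne] /=; [lia | do 2 case: ifP; lia].
Qed.

Lemma phi_eval_pair x y : D x -> D y -> exists a, phi x = x a /\ phi y = y a.
Proof.
move=> Dx Dy.
have [a1 N1] := phi_eval_factors Dx; have [a2 N2] := phi_eval_factors Dy.
have self (z : A -> nat) : factors z z by move=> b d ->.
have hx := N1 x Dx (self x); have hy := N2 y Dy (self y).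
have [q0 yq0 q0min] :=
  exists_minimizer (P := fun q => y q = n.-1) x (ex_intro _ _ (hom_top Dy)).
have key : x a1 = x a2 \/ x q0 <= minn (x a1) (x a2).
  by move: (pair_key Dx Dy N1 N2 yq0 q0min); rewrite (hom_biimp _ _ Dx); case: eqP; auto.
(* At y the element q0 is the top, so the second disjunct yields y a2; at x
   the key inequality makes the first one yield x a1. *)
exists (hjoin (hmeet a1 (himp q0 (biimp a1 a2))) (hmeet a2 q0)).
rewrite (hom_join Dx) (hom_join Dy) !(hom_meet Dx) !(hom_meet Dy).
rewrite !(hom_imp Dx) !(hom_imp Dy) hx hy yq0 /cimp /ctop.
rewrite (hom_biimp _ _ Dx) (hom_biimp _ _ Dy).
have := hom_lt Dx a1; have := hom_lt Dx a2; have := hom_lt Dy a1; have := hom_lt Dy a2.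
have := hom_lt Dx q0.
case: (x a1 =P x a2) => hxe; case: (y a1 =P y a2) => hye /=;
  do ![case: ifP => ?]; split; lia.
Qed.

(* Baker-Pixley interpolation: if phi evaluates at an element of F on any two
   homomorphisms, then on any nonempty finite family it evaluates at an
   element of the sublattice generated by F, namely at the median of
   witnesses for three subfamilies each omitting one member. *)
Lemma phi_eval_family F :
  (forall x y, D x -> D y -> exists2 a, In a F & phi x = x a /\ phi y = y a) ->
  forall Y : list (A -> nat), (forall x, In x Y -> D x) -> Y <> nil ->
  exists2 b, in_lattice F b & forall x, In x Y -> phi x = x b.
Proof.
move=> hpair Y; have [N] := ubnP (size Y); elim: N Y => // N IH.
case=> [|x1 [|x2 [|x3 r]]] //= hs hD _.
- have [a aF [h1 _]] := hpair x1 x1 (hD x1 (or_introl erefl)) (hD x1 (or_introl erefl)).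
  by exists a; [exact: in_lattice_base | move=> x [<-|[]]].
- have [a aF [h1 h2]] :=
    hpair x1 x2 (hD x1 (or_introl erefl)) (hD x2 (or_intror (or_introl erefl))).
  by exists a; [exact: in_lattice_base | move=> x [<-|[<-|[]]]].
have sub Z : (forall x, In x Z -> In x [:: x1, x2, x3 & r]) -> forall x, In x Z -> D x.
  by move=> hZ x /hZ /hD.
have [b1 B1 h1] := IH [:: x2, x3 & r] ltac:(simpl in *; lia)
  (sub [:: x2, x3 & r] ltac:(move=> ? /=; tauto)) ltac:(discriminate).
have [b2 B2 h2] := IH [:: x1, x3 & r] ltac:(simpl in *; lia)
  (sub [:: x1, x3 & r] ltac:(move=> ? /=; tauto)) ltac:(discriminate).
have [b3 B3 h3] := IH [:: x1, x2 & r] ltac:(simpl in *; lia)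
  (sub [:: x1, x2 & r] ltac:(move=> ? /=; tauto)) ltac:(discriminate).
exists (median b1 b2 b3).
  by apply: in_lattice_join; [apply: in_lattice_join|]; apply: in_lattice_meet.
move=> x hx; rewrite (hom_median _ _ _ (hD x hx)).
have : (In x [:: x2, x3 & r] /\ In x [:: x1, x3 & r]) \/
       (In x [:: x2, x3 & r] /\ In x [:: x1, x2 & r]) \/
       (In x [:: x1, x3 & r] /\ In x [:: x1, x2 & r]) by move: hx => /=; tauto.
by case=> [[/h1 e1 /h2 e2]|[[/h1 e1 /h3 e3]|[/h2 e2 /h3 e3]]]; lia.
Qed.

Definition support (x : A -> nat) : list A :=
  witness [::] (fun L => forall y, D y -> agree_on L y x -> phi y = phi x).

Lemma supportP x : D x -> forall y, D y -> agree_on (support x) y x -> phi y = phi x.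
Proof. by move=> Dx; case: Hphi => _ hc _ _; exact: witnessP (hc x Dx). Qed.

(* By compactness of D, phi depends on a single finite set of coordinates. *)
Lemma phi_finitely_determined :
  exists F0, forall y y', D y -> D y' -> agree_on F0 y y' -> phi y = phi y'.
Proof.
have [P [PD Pcov]] := finite_subcover (@hom_lt n A) (@hom_closed n A) support.
exists (concat (List.map support P)) => y y' Dy Dy' ag.
have [k [kP hk]] := Pcov y Dy; have Dk := PD k kP.
rewrite (supportP Dk Dy hk) (supportP Dk Dy') // => a ha; rewrite -ag ?hk //.
by apply/in_concat; exists (support k); split => //; apply/in_map_iff; exists k.
Qed.

Definition pair_witness (z : A + A -> nat) : A :=
  witness (hbot A) (fun a => phi (fun b => z (inl b)) = z (inl a) /\
                             phi (fun b => z (inr b)) = z (inr a)).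

Lemma pair_witnessP z : D (fun b => z (inl b)) -> D (fun b => z (inr b)) ->
  phi (fun b => z (inl b)) = z (inl (pair_witness z)) /\
  phi (fun b => z (inr b)) = z (inr (pair_witness z)).
Proof.
move=> h1 h2; apply: (@witnessP _ (hbot A) (fun a =>
  phi (fun b => z (inl b)) = z (inl a) /\ phi (fun b => z (inr b)) = z (inr a))).
exact: phi_eval_pair.
Qed.

(* By compactness of D x D, the evaluation points of pairs can be taken from
   a single finite list. *)
Lemma phi_pairs_finite : exists F1, forall x y, D x -> D y ->
  exists2 a, In a F1 & phi x = x a /\ phi y = y a.
Proof.
pose K2 (z : A + A -> nat) := D (fun b => z (inl b)) /\ D (fun b => z (inr b)).
have K2b z : K2 z -> forall i, z i < n.
  by case=> h1 h2 [a|a]; [exact: (hom_lt h1 a) | exact: (hom_lt h2 a)].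
pose U (z : A + A -> nat) :=
  List.map inl (support (fun b => z (inl b)) ++ [:: pair_witness z]) ++
  List.map inr (support (fun b => z (inr b)) ++ [:: pair_witness z]).
have K2c : fin_closed K2 by exact: fin_closed_sum (@hom_closed n A) (@hom_closed n A).
have [P [PK Pcov]] := finite_subcover K2b K2c U.
exists (List.map pair_witness P) => x y Dx Dy.
pose z (s : A + A) := match s with inl a => x a | inr a => y a end.
have [k [kP hk]] := Pcov z (conj Dx Dy); have [Dk1 Dk2] := PK k kP.
have [e1 e2] := pair_witnessP Dk1 Dk2.
have hl : agree_on (support (fun b => k (inl b)) ++ [:: pair_witness k]) x (fun b => k (inl b)).
  by move=> a ha; apply: (hk (inl a)); apply/in_or_app; left; apply/in_map_iff; exists a.
have hr : agree_on (support (fun b => k (inr b)) ++ [:: pair_witness k]) y (fun b => k (inr b)).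
  by move=> a ha; apply: (hk (inr a)); apply/in_or_app; right; apply/in_map_iff; exists a.
exists (pair_witness k); first by apply/in_map_iff; exists k.
split.
- rewrite (supportP Dk1 Dx) => [|a ha]; last by apply: hl; apply/in_or_app; left.
  by rewrite e1 hl //; apply/in_or_app; right; left.
- rewrite (supportP Dk2 Dy) => [|a ha]; last by apply: hr; apply/in_or_app; left.
  by rewrite e2 hr //; apply/in_or_app; right; left.
Qed.

(* Every morphism of the dual is an evaluation: interpolate on a finite
   family of homomorphisms covering D up to the coordinates F0 ++ F1. *)
Theorem phi_is_evaluation : exists a, forall x, D x -> phi x = x a.
Proof.
have [F0 det] := phi_finitely_determined; have [F1 pairs] := phi_pairs_finite.
pose F := F0 ++ F1.
have [P [PD Pcov]] := finite_subcover (@hom_lt n A) (@hom_closed n A) (fun _ => F).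
case: P PD Pcov => [|k0 P] PD Pcov.
  by exists (hbot A) => x /Pcov [k [[] _]].
have pairsF x y : D x -> D y -> exists2 a, In a F & phi x = x a /\ phi y = y a.
  by move=> Dx Dy; have [a aF h] := pairs x y Dx Dy; exists a => //; apply/in_or_app; right.
have [b Bb hb] := phi_eval_family pairsF PD ltac:(discriminate).
exists b => x Dx; have [k [kP hk]] := Pcov x Dx; have Dk := PD k kP.
rewrite (det x k Dx Dk); last by move=> a ha; apply: hk; apply/in_or_app; left.
by rewrite hb // (in_lattice_agree Dk Dx _ Bb) // => f /hk ->.
Qed.
End Morphism.

Lemma eval_hom n (A : HAlg) : eval_is_hom n A.
Proof. by split => [a b x []|a b x []|a b x []|x [] _ _ _ _ []|x [] _ _ _ _ []]. Qed.

Lemma eval_morphism n c j (A : HAlg) (a : A) : alter_morphism n c j (fun x => x a).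
Proof.
split=> // [x Dx|x Dx]; first exact: hom_lt.
by exists [:: a] => y Dy h; apply: h; left.
Qed.

Lemma eval_injective n (A : HAlg) : in_Gn n A ->
  forall a b : A, (forall x, DA n x -> x a = x b) -> a = b.
Proof.
move=> [S [emb [inj homs]]] a b h; apply: inj; apply: boolp.funext => s.
exact: (h (fun a => emb a s) (homs s)).
Qed.

Theorem theorem3p3 (n : nat) (c : nat -> bool) (j : nat) (A : HAlg) :
  4 <= n -> 1 <= j <= n - 2 -> in_Gn n A ->
  [/\ eval_is_hom n A,
      (forall a, alter_morphism n c j (A := A) (fun x => x a)),
      (forall a b : A, (forall x, DA n x -> x a = x b) -> a = b) &
      (forall phi : (A -> nat) -> nat, alter_morphism (A := A) n c j phi ->
         exists a : A, forall x, DA n x -> phi x = x a)].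
Proof.
move=> n4 hj GA; split.
- exact: eval_hom.
- exact: eval_morphism.
- exact: eval_injective.
- by move=> phi Hphi; exact: (phi_is_evaluation n4 hj Hphi).
Qed.
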